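(* For all integers $r\geqslant 1$ and $0\leqslant j\leqslant r$, in $\mathbb{C}[\alpha,\beta,\gamma]$ we have: (i) $\rho_j\phi_{r-j}\zeta_{r-j}\in J_r$; (ii) $\alpha\,\eta_j\psi_{r-j}\zeta_{r-j}\in J_r$.
   Context: Polynomials $\zeta_k\in\mathbb{C}[\alpha,\beta,\gamma]$: $\zeta_i=0$ for $i<0$, $\zeta_0=1$, $\zeta_{k+1}=\alpha\zeta_k+k^2(\beta+(-1)^k8)\zeta_{k-1}+2k(k-1)\gamma\zeta_{k-2}$ for $k\geqslant0$; $J_k$ is the ideal $(\zeta_k,\zeta_{k+1},\zeta_{k+2})$. Set $\beta_+=\beta+8$, $\beta_-=\beta-8$, $\phi_r=\beta_-^{\lfloor r/2\rfloor+1}\beta_+^{\lceil r/2\rceil}$, $\psi_r=\beta_-^{\lfloor r/2\rfloor}\beta_+^{\lceil r/2\rceil}$, $\rho_j=\beta_-^{2\lfloor (j-1)/2\rfloor}\beta_+^{j-1}$ and $\eta_j=\beta_-^{j-1}\beta_+^{j-1}$ for $j\geqslant1$, and $\rho_j=\eta_j=1$ for $j<1$. *)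

From HB Require Import structures.
From mathcomp Require Import all_boot all_order all_algebra.
From mathcomp Require Import reals.
From mathcomp Require Import complex.
From mathcomp Require Import mpoly.

Set Implicit Arguments.
Unset Strict Implicit.
Unset Printing Implicit Defensive.

Import GRing.Theory.
Local Open Scope ring_scope.

Section Defs.
Variable R : realType.

Definition Cpoly := {mpoly R[i][3]}.

Definition alpha : Cpoly := 'X_(inord 0).
Definition beta  : Cpoly := 'X_(inord 1).
Definition gamma : Cpoly := 'X_(inord 2).

(* zeta3 k = (zeta_k, zeta_{k-1}, zeta_{k-2}), with zeta_i = 0 for i < 0 *)
Fixpoint zeta3 (k : nat) : Cpoly * Cpoly * Cpoly :=
  match k with
  | 0 => (1, 0, 0)
  | k'.+1 =>
      let: (z0, z1, z2) := zeta3 k' in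
      (alpha * z0
         + (k' ^ 2)%:R * (beta + (-1) ^+ k' * 8) * z1
         + (2 * k' * (k' - 1))%:R * gamma * z2,
       z0, z1)
  end.

Definition zeta (k : nat) : Cpoly := (zeta3 k).1.1.

Definition inJ (k : nat) (p : Cpoly) : Prop :=
  exists a b c : Cpoly, p = a * zeta k + b * zeta k.+1 + c * zeta k.+2.

Definition betap : Cpoly := beta + 8.
Definition betam : Cpoly := beta - 8.

Definition phi (r : nat) : Cpoly := betam ^+ (r./2).+1 * betap ^+ (uphalf r).
Definition psi (r : nat) : Cpoly := betam ^+ (r./2) * betap ^+ (uphalf r).
Definition rho (j : nat) : Cpoly :=
  if (1 <= j)%N then betam ^+ (2 * (j.-1)./2) * betap ^+ j.-1 else 1.
Definition eta_ (j : nat) : Cpoly :=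
  if (1 <= j)%N then betam ^+ j.-1 * betap ^+ j.-1 else 1.

End Defs.

(* Write beta_sign k for beta + (-1)^k 8, which is beta_- or beta_+ according to
   the parity of k.  Solving the recurrence at index k + 3 for its last term
   shows gamma zeta_k \in J_{k+1}, hence gamma J_{r-1} \subset J_r; solving it
   at index k + 2 for its middle term gives
     (k+1)^2 beta_sign (k+1) zeta_k = zeta_{k+2} - alpha zeta_{k+1} - 2(k+1)k gamma zeta_{k-1}.
   With k = r - j, the three terms on the right are handled by the statement
   for (r, j - 2), (r, j - 1) and (r - 1, j) (for small j they are generators
   of J_r), so both claims follow by induction on r and strong induction on j:
   the powers of beta_- and beta_+ in rho_j phi_{r-j} and eta_j psi_{r-j} are
   just large enough to supply the factor beta_sign (r - j + 1) together with
   the multipliers of those three earlier statements. *)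

From mathcomp Require Import all_boot all_algebra.
From mathcomp Require Import reals complex mpoly.
From mathcomp Require Import zify ring.
Import GRing.Theory Num.Theory.
Local Open Scope ring_scope.

Section Lemma4p1.
Variable R : realType.
Local Notation P := (Cpoly R).
Local Notation inJ := (@inJ R).
Local Notation zeta := (@zeta R).
Local Notation alpha := (alpha R).
Local Notation gamma := (gamma R).

Lemma inJ0 k : inJ k 0.
Proof. by exists 0, 0, 0; ring. Qed.

Lemma inJD k p q : inJ k p -> inJ k q -> inJ k (p + q).
Proof.
move=> [a [b [c ->]]] [a' [b' [c' ->]]].
by exists (a + a'), (b + b'), (c + c'); ring.
Qed.

Lemma inJMl k q p : inJ k p -> inJ k (q * p).
Proof. by move=> [a [b [c ->]]]; exists (q * a), (q * b), (q * c); ring. Qed.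

Lemma inJB k p q : inJ k p -> inJ k q -> inJ k (p - q).
Proof. by move=> hp hq; apply: inJD => //; rewrite -mulN1r; apply: inJMl. Qed.

Lemma inJ_zeta k m : (k <= m <= k.+2)%N -> inJ k (zeta m).
Proof.
move=> /andP[km mk]; have [d -> d2] : exists2 d, m = (k + d)%N & (d <= 2)%N.
  by exists (m - k)%N; lia.
case: d d2 => [|[|[|//]]] _; rewrite ?addn0 ?addn1 ?addn2.
- by exists 1, 0, 0; ring.
- by exists 0, 1, 0; ring.
- by exists 0, 0, 1; ring.
Qed.

Lemma inJ_natr_cancel k n p : n != 0%N -> inJ k (n%:R * p) -> inJ k p.
Proof.
move=> n0 /(inJMl _ ((n%:R : R[i])^-1)%:MP); rewrite mulrA -mpolyC_nat -mpolyCM.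
by rewrite mulVf ?pnatr_eq0 // mul1r.
Qed.

Definition beta_sign k : P := beta R + (-1) ^+ k * 8.

(* The truncated indices k.-1 and k.-2 are harmless: their coefficients vanish
   whenever the truncation takes effect. *)
Lemma zetaS k : zeta k.+1 = alpha * zeta k + (k ^ 2)%:R * beta_sign k * zeta k.-1
  + (2 * k * (k - 1))%:R * gamma * zeta k.-2.
Proof.
rewrite /zeta /beta_sign; case: k => [|[|k]] /=; first by ring.
  by rewrite muln0 !mul0r addr0.
by case: (zeta3 R k) => [[a b] c].
Qed.

Lemma zeta1 : zeta 1 = alpha.
Proof. by rewrite zetaS (_ : zeta 0 = 1) // exp0n // !mul0n !mul0r !addr0 mulr1. Qed.

Lemma inJ_gamma_zeta k : inJ k.+1 (gamma * zeta k).
Proof.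
apply: (@inJ_natr_cancel _ (2 * k.+2 * k.+1)) => //.
have -> : (2 * k.+2 * k.+1)%:R * (gamma * zeta k) =
    zeta k.+3 - alpha * zeta k.+2 - (k.+2 ^ 2)%:R * beta_sign k.+2 * zeta k.+1.
  by rewrite zetaS /= subn1 /=; ring.
by apply: inJB; [apply: inJB | apply: inJMl]; [|apply: inJMl|]; apply: inJ_zeta; lia.
Qed.

Lemma inJ_gamma k p : inJ k p -> inJ k.+1 (gamma * p).
Proof.
move=> [a [b [c ->]]].
have -> : gamma * (a * zeta k + b * zeta k.+1 + c * zeta k.+2) =
    a * (gamma * zeta k) + (gamma * b) * zeta k.+1 + (gamma * c) * zeta k.+2 by ring.
by apply: inJD; [apply: inJD|]; apply: inJMl; [apply: inJ_gamma_zeta|..];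
  apply: inJ_zeta; lia.
Qed.

Lemma inJ_beta_sign_zeta n k p q :
  inJ n (p * (q * zeta k.+2)) -> inJ n (p * (q * (alpha * zeta k.+1))) ->
  ((0 < k)%N -> inJ n (p * (q * (gamma * zeta k.-1)))) ->
  inJ n (p * beta_sign k.+1 * (q * zeta k)).
Proof.
move=> h2 h1 h0; apply: (@inJ_natr_cancel _ (k.+1 ^ 2)%N); first by rewrite expn_eq0.
have -> : (k.+1 ^ 2)%:R * (p * beta_sign k.+1 * (q * zeta k)) =
    p * (q * zeta k.+2) - p * (q * (alpha * zeta k.+1))
    - (2 * k.+1 * k)%:R * (p * (q * (gamma * zeta k.-1))).
  by rewrite zetaS /= subn1 /=; ring.
apply: inJB; first exact: inJB.
have [->|k_gt0] := posnP k; first by rewrite muln0 mul0r; apply: inJ0.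
exact/inJMl/h0.
Qed.

Definition bmon a b : P := betam R ^+ a * betap R ^+ b.

Lemma bmonD a b c d : bmon (a + c) (b + d) = bmon a b * bmon c d.
Proof. by rewrite /bmon !exprD; ring. Qed.

Lemma beta_signE k : beta_sign k = bmon (odd k) (~~ odd k).
Proof.
rewrite /beta_sign /bmon /betam /betap -signr_odd.
by case: (odd k); rewrite /= ?expr0 ?expr1 ?mulr1 ?mul1r ?mulN1r.
Qed.

Lemma bmon_beta_signS a b k : (~~ odd k <= a)%N -> (odd k <= b)%N ->
  bmon a b = bmon (a - ~~ odd k) (b - odd k) * beta_sign k.+1.
Proof. by move=> ha hb; rewrite beta_signE /= negbK -bmonD !subnK. Qed.

Lemma inJ_bmonW n a b a' b' x : (a <= a')%N -> (b <= b')%N ->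
  inJ n (bmon a b * x) -> inJ n (bmon a' b' * x).
Proof.
by move=> ha hb /(inJMl _ (bmon (a' - a) (b' - b))); rewrite mulrA -bmonD !subnK.
Qed.

Lemma rho_phiE j k :
  rho R j * phi R k = bmon (2 * (j.-1)./2 + (k./2).+1) (j.-1 + uphalf k).
Proof. by rewrite bmonD; case: j => [|j]; rewrite /rho /bmon ?expr0 ?mulr1. Qed.

Lemma eta_psiE j k : eta_ R j * psi R k = bmon (j.-1 + k./2) (j.-1 + uphalf k).
Proof. by rewrite bmonD; case: j => [|j]; rewrite /eta_ /bmon ?expr0 ?mulr1. Qed.

Definition claim4p1 r j :=
  inJ r (rho R j * phi R (r - j) * zeta (r - j)) /\
  inJ r (eta_ R j * psi R (r - j) * (alpha * zeta (r - j))).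

Section InductiveStep.
Variables r j : nat.
Hypothesis j_gt0 : (0 < j)%N.
Hypothesis j_le_r : (j <= r)%N.
Hypothesis IHj : forall i, (i < j)%N -> claim4p1 r i.
Hypothesis IHr : (j < r)%N -> claim4p1 r.-1 j.

Lemma claim4p1_rho_phi : inJ r (rho R j * phi R (r - j) * zeta (r - j)).
Proof.
set k := (r - j)%N; have kE : k = (r - j)%N by []; clearbody k.
rewrite rho_phiE (@bmon_beta_signS _ _ k); try lia.
rewrite -[zeta k]mul1r; apply: inJ_beta_sign_zeta; rewrite mul1r.
- have [j_le2|j_gt2] := leqP j 2; first by apply/inJMl/inJ_zeta; lia.
  have [+ _] : claim4p1 r j.-2 by apply: IHj; lia.
  rewrite rho_phiE (_ : r - j.-2 = k.+2)%N; last lia.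
  by apply: inJ_bmonW; lia.
- have [j1|j_gt1] := leqP j 1.
    by rewrite mulrA; apply/inJMl/inJ_zeta; lia.
  have [_] : claim4p1 r j.-1 by apply: IHj; lia.
  rewrite eta_psiE (_ : r - j.-1 = k.+1)%N; last lia.
  by apply: inJ_bmonW; lia.
- move=> k_gt0; have [+ _] : claim4p1 r.-1 j by apply: IHr; lia.
  move=> /inJ_gamma; rewrite prednK; last lia.
  rewrite mulrCA rho_phiE (_ : r.-1 - j = k.-1)%N; last lia.
  by apply: inJ_bmonW; lia.
Qed.

Lemma claim4p1_eta_psi : inJ r (eta_ R j * psi R (r - j) * (alpha * zeta (r - j))).
Proof.
have [r1|r_gt1] := leqP r 1.
  have [-> ->] : j = 1%N /\ r = 1%N by lia.
  rewrite subnn eta_psiE /bmon /= !expr0 !mul1r (_ : zeta 0 = 1) // mulr1 -zeta1.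
  by apply: inJ_zeta.
set k := (r - j)%N; have kE : k = (r - j)%N by []; clearbody k.
rewrite eta_psiE (@bmon_beta_signS _ _ k); try lia.
apply: inJ_beta_sign_zeta.
- have [j_le2|j_gt2] := leqP j 2; first by rewrite mulrA; apply/inJMl/inJ_zeta; lia.
  have [_] : claim4p1 r j.-2 by apply: IHj; lia.
  rewrite eta_psiE (_ : r - j.-2 = k.+2)%N; last lia.
  by apply: inJ_bmonW; lia.
- have [j1|j_gt1] := leqP j 1.
    by rewrite mulrA mulrA; apply/inJMl/inJ_zeta; lia.
  have [_] : claim4p1 r j.-1 by apply: IHj; lia.
  rewrite eta_psiE (_ : r - j.-1 = k.+1)%N; last lia.
  move=> /(inJMl _ alpha); rewrite mulrCA.
  by apply: inJ_bmonW; lia.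
- move=> k_gt0; have [_] : claim4p1 r.-1 j by apply: IHr; lia.
  move=> /inJ_gamma; rewrite prednK; last lia.
  rewrite mulrCA eta_psiE (_ : r.-1 - j = k.-1)%N; last lia.
  rewrite (mulrCA gamma); apply: inJ_bmonW; lia.
Qed.

End InductiveStep.

Lemma claim4p1_holds r j : (0 < r)%N -> (j <= r)%N -> claim4p1 r j.
Proof.
elim: r j => [//|r IHr] j _; elim/ltn_ind: j => j IHj j_le.
have [->|j_gt0] := posnP j.
  by rewrite /claim4p1 subn0 !mulrA; split; apply/inJMl/inJ_zeta; lia.
have IHj' i : (i < j)%N -> claim4p1 r.+1 i by move=> i_lt; apply: IHj; lia.
have IHr' : (j < r.+1)%N -> claim4p1 r j by move=> j_lt; apply: IHr; lia.
by split; [apply: claim4p1_rho_phi | apply: claim4p1_eta_psi].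
Qed.

End Lemma4p1.

Theorem lemma4p1 (R : realType) (r j : nat) :
  (1 <= r)%N -> (j <= r)%N ->
  inJ r (rho R j * phi R (r - j) * zeta R (r - j)) /\
  inJ r (alpha R * eta_ R j * psi R (r - j) * zeta R (r - j)).
Proof.
move=> r_gt0 j_le; have [hA hB] := @claim4p1_holds R r j r_gt0 j_le; split=> //.
suff -> : alpha R * eta_ R j * psi R (r - j) * zeta R (r - j) =
    eta_ R j * psi R (r - j) * (alpha R * zeta R (r - j)) by [].
by ring.
Qed.
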